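(* Let $(R_1,\mathfrak n_1,k)$ and $(R_2,\mathfrak n_2,k)$ be Noetherian local rings of positive depth with common residue field $k$, and let $R=R_1\times_k R_2$ be their fiber product over $k$. Then $\mathcal T(R)$ is finite if and only if both $\mathcal T(R_1)$ and $\mathcal T(R_2)$ are finite.
   Context: $R_1\times_kR_2=\{(s,t)\in R_1\times R_2\mid \pi_1(s)=\pi_2(t)\}$ with $\pi_j\colon R_j\to k$ the canonical surjections. For a ring $A$, $\mathcal T(A)$ is the set of trace ideals of $A$ containing a non-zerodivisor, where the trace ideal of an $A$-module $M$ is $\sum_{f\in\mathrm{Hom}_A(M,A)}\mathrm{Im}f$. *)

From HB Require Import structures.
From mathcomp Require Import all_boot all_order all_algebra.
From mathcomp Require Import boolp classical_sets cardinality.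
Set Implicit Arguments. Unset Strict Implicit. Unset Printing Implicit Defensive.
Import GRing.Theory.
Local Open Scope ring_scope.
Local Open Scope classical_set_scope.

Definition is_ideal (A : comNzRingType) (I : set A) : Prop :=
  I 0 /\ (forall x y, I x -> I y -> I (x + y)) /\ (forall a x, I x -> I (a * x)).

Definition maximal_ideal (A : comNzRingType) (m : set A) : Prop :=
  is_ideal m /\ ~ m 1 /\
  (forall J : set A, is_ideal J -> m `<=` J -> J = m \/ J = setT).

Definition is_local (A : comNzRingType) : Prop :=
  exists m : set A, maximal_ideal m /\ forall m', maximal_ideal m' -> m' = m.

Definition gen_ideal (A : comNzRingType) (s : seq A) : set A :=
  [set x | exists c : 'I_(size s) -> A, x = \sum_(i < size s) c i * s`_i].

Definition noetherian (A : comNzRingType) : Prop :=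
  forall I : set A, is_ideal I -> exists s : seq A, I = gen_ideal s.

Definition nonzerodivisor (A : comNzRingType) (x : A) : Prop :=
  forall y, x * y = 0 -> y = 0.

(* depth A > 0 for a local ring: the maximal ideal contains an A-regular
   element (a regular sequence of length 1). *)
Definition positive_depth (A : comNzRingType) : Prop :=
  forall m : set A, maximal_ideal m -> exists2 x, m x & nonzerodivisor x.

Definition trace_ideal (A : comNzRingType) (M : lmodType A) : set A :=
  [set a | exists (n : nat) (f : 'I_n -> {linear M -> A^o}) (v : 'I_n -> M),
            a = \sum_(i < n) f i (v i)].

Definition calT (A : comNzRingType) : set (set A) :=
  [set I | (exists M : lmodType A, I = trace_ideal M) /\
           exists2 x, I x & nonzerodivisor x].

Arguments calT A : clear implicits.
Section FiberProduct.
Variables (R1 R2 : comNzRingType) (k : fieldType).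
Variables (pi1 : {rmorphism R1 -> k}) (pi2 : {rmorphism R2 -> k}).

Definition fp_pred : {pred R1 * R2} := [pred x | pi1 x.1 == pi2 x.2].

Lemma fp_closed : subring_closed fp_pred.
Proof.
split; rewrite /fp_pred /= ?inE /=.
- by rewrite !rmorph1.
- by move=> x y; rewrite !inE /= !rmorphB => /eqP-> /eqP->.
- by move=> x y; rewrite !inE /= !rmorphM => /eqP-> /eqP->.
Qed.

HB.instance Definition _ := GRing.isSubringClosed.Build (R1 * R2)%type fp_pred fp_closed.

Record fiber_product := FiberProd { fp_val :> R1 * R2 ; _ : fp_val \in fp_pred }.

HB.instance Definition _ := [isSub for fp_val].
HB.instance Definition _ := [Choice of fiber_product by <:].
HB.instance Definition _ := [SubChoice_isSubComNzRing of fiber_product by <:].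

End FiberProduct.

From HB Require Import structures.
From mathcomp Require Import all_boot all_order all_algebra.
From mathcomp Require Import boolp classical_sets cardinality.
Set Implicit Arguments. Unset Strict Implicit. Unset Printing Implicit Defensive.
Import GRing.Theory.
Local Open Scope ring_scope.
Local Open Scope classical_set_scope.

(** An ideal J lies in T(A) iff it contains a non-zerodivisor and is its own
    trace, i.e. every A-linear map J -> A sends J into J ([calT_iff]).
    Let n1, n2 be the maximal ideals of R1, R2 and R = R1 x_k R2.

    If I1 is a proper ideal in T(R1), then I1 x n2 lies in T(R) and projects
    onto I1: for regular b in n2 and c in I1, (0,b)(c,0) = 0, so any linear
    map on I1 x n2 preserves the two components, and on the first one it is
    a linear map on I1.  Hence T(R1) is finite when T(R) is.

    Conversely, every proper J in T(R) lies in n1 x n2 and equals I1 x I2 with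
    I1 = {c | (c,0) in J}, and each Ii lies in T(Ri) or equals ni.  Indeed, a
    linear map phi : I1 -> R1 with values in n1 lifts to (c,d) |-> (phi c, 0)
    on J, which must preserve J; if instead phi c0 is a unit, the lifts of
    y * phi for y in n1 give n1 = I1. *)

Section Ideals.
Variable A : comNzRingType.
Implicit Types (J : set A) (phi : A -> A).

Lemma ideal_setT J : is_ideal J -> J 1 -> J = setT.
Proof.
move=> [_ [_ JM]] J1; apply/seteqP; split => // a _.
by rewrite -[a]mulr1; apply: JM.
Qed.

(** Hom_A(J, A) is represented by maps A -> A that are linear on J; their
    values outside J do not matter. *)
Definition linear_on J phi :=
  forall a x y, J x -> J y -> phi (a * x + y) = a * phi x + phi y.

Definition trace_closed J := forall phi, linear_on J phi -> forall x, J x -> J (phi x).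

Lemma linear_on0 J phi : J 0 -> linear_on J phi -> phi 0 = 0.
Proof.
move=> J0 phiL; have := phiL 1 0 0 J0 J0.
by rewrite !mul1r addr0 -{1}[phi 0]addr0 => /addrI.
Qed.

Lemma linear_on_annihilator J phi a x :
  is_ideal J -> linear_on J phi -> J x -> a * x = 0 -> a * phi x = 0.
Proof.
move=> [J0 _] phiL Jx ax0; have := phiL a x 0 Jx J0.
by rewrite ax0 addr0 (linear_on0 J0 phiL) addr0 => <-.
Qed.

Lemma linear_on_sum J phi n (F : 'I_n -> A) : is_ideal J -> linear_on J phi ->
  (forall i, J (F i)) ->
  J (\sum_(i < n) F i) /\ phi (\sum_(i < n) F i) = \sum_(i < n) phi (F i).
Proof.
move=> [J0 [JD _]] phiL JF.
apply: (big_rec2 (fun y1 y2 => J y1 /\ phi y1 = y2)).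
  by split => //; exact: linear_on0 phiL.
move=> i y1 y2 _ [Jy <-]; split; first exact: JD.
by have := phiL 1 (F i) y1 (JF i) Jy; rewrite !mul1r.
Qed.

Lemma proper_ideal_sub_ker (k : fieldType) (f : A -> k) J :
  (forall x, f x != 0 -> exists y, x * y = 1) ->
  is_ideal J -> J <> setT -> J `<=` [set x | f x = 0].
Proof.
move=> unitf HJ JnT x Jx; apply/eqP; apply: contra_notT JnT => /unitf [y xy1].
by apply: ideal_setT => //; rewrite -xy1 mulrC; apply: HJ.2.2.
Qed.

End Ideals.

(** Bundling the closure proof lets an ideal carry a canonical module structure. *)
Record ideal (A : comNzRingType) :=
  Ideal { ideal_set : set A; ideal_setP : is_ideal ideal_set }.

Section IdealModule.
Variables (A : comNzRingType) (I : ideal A).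

Definition ideal_pred : {pred A^o} := fun x => `[< ideal_set I x >].

Lemma ideal_pred_submod_closed : submod_closed ideal_pred.
Proof.
have [J0 [JD JM]] := ideal_setP I; split; first exact/asboolP.
by move=> a u v /asboolP Ju /asboolP Jv; apply/asboolP; apply: JD (JM _ _ Ju) Jv.
Qed.

HB.instance Definition _ :=
  GRing.isSubmodClosed.Build A A^o ideal_pred ideal_pred_submod_closed.

Record ideal_module := IdealModule { ideal_val : A^o; _ : ideal_val \in ideal_pred }.
HB.instance Definition _ := [isSub for ideal_val].
HB.instance Definition _ := [Choice of ideal_module by <:].
HB.instance Definition _ := [SubChoice_isSubLmodule of ideal_module by <:].

Definition ideal_incl : {linear ideal_module -> A^o} :=
  GRing.Linear.clone _ _ _ _ (val : ideal_module -> A^o) _.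

End IdealModule.

Section Compose.
Variables (A : comNzRingType) (M : lmodType A) (J : set A) (phi : A -> A).
Hypothesis phiL : linear_on J phi.
Variables (f : {linear M -> A^o}) (fJ : forall m, J (f m)).

Definition comp_on (m : M) : A^o := phi (f m).

Lemma comp_on_linear : linear_for *:%R comp_on.
Proof. by move=> a u v; rewrite /comp_on linearP phiL. Qed.

HB.instance Definition _ := GRing.isLinear.Build A M A^o *:%R comp_on comp_on_linear.

Definition comp_onL : {linear M -> A^o} := GRing.Linear.clone _ _ _ _ comp_on _.

End Compose.

Section Trace.
Variable A : comNzRingType.

Lemma trace_ideal_is_ideal (M : lmodType A) : is_ideal (trace_ideal M).
Proof.
split.
  have f0 : 'I_0 -> {linear M -> A^o} by case=> m; rewrite ltn0.
  by exists 0%N, f0, (fun _ => 0); rewrite big_ord0.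
split.
  move=> x y [n [f [v ->]]] [n' [g [w ->]]].
  exists (n + n')%N, (fun i => match split i with inl j => f j | inr j => g j end),
    (fun i => match split i with inl j => v j | inr j => w j end).
  rewrite big_split_ord /=; congr (_ + _); apply: eq_bigr => i _.
    by rewrite (unsplitK (inl i) : split (lshift n' i) = inl i).
  by rewrite (unsplitK (inr i) : split (rshift n i) = inr i).
move=> a x [n [f [v ->]]]; exists n, f, (fun i => a *: v i).
by rewrite mulr_sumr; apply: eq_bigr => i _; rewrite linearZ.
Qed.

Lemma trace_ideal_closed (M : lmodType A) : trace_closed (trace_ideal M).
Proof.
move=> phi phiL _ [n [f [v ->]]].
have fT i m : trace_ideal M (f i m).
  by exists 1%N, (fun _ => f i), (fun _ => m); rewrite big_ord1.
have [_ ->] := linear_on_sum (F := fun i => f i (v i))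
  (trace_ideal_is_ideal M) phiL (fun i => fT i (v i)).
by exists n, (fun i => comp_onL phiL (fT i)), v.
Qed.

Lemma trace_closed_trace_ideal (J : set A) (HJ : is_ideal J) :
  trace_closed J -> J = trace_ideal (ideal_module (Ideal HJ)).
Proof.
have inJ y : J y -> (y : A^o) \in ideal_pred (Ideal HJ) by move=> Jy; apply/asboolP.
move=> Jcl; apply/seteqP; split => [x Jx|_ [n [f [v ->]]]].
  by exists 1%N, (fun _ => ideal_incl (Ideal HJ)), (fun _ => IdealModule (inJ x Jx));
    rewrite big_ord1.
suff Jf i : J (f i (v i)).
  by have [] := @linear_on_sum _ J id _ _ HJ (fun a x y _ _ => erefl) Jf.
pose phi (y : A) : A := if insub (y : A^o) is Some u then f i u else 0.
have phiE (u : ideal_module (Ideal HJ)) : phi (val u) = f i u by rewrite /phi valK.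
have phiL : linear_on J phi.
  move=> a y z Jy Jz.
  pose u : ideal_module (Ideal HJ) := Sub y (inJ _ Jy).
  have -> : a * y + z = val (a *: u + Sub z (inJ _ Jz)) by rewrite raddfD.
  by rewrite phiE linearP -!phiE !SubK.
by rewrite -phiE; apply: Jcl phiL _ _; have /asboolP := valP (v i).
Qed.

Lemma calT_iff (J : set A) : calT A J <->
  [/\ is_ideal J, trace_closed J & exists2 x, J x & nonzerodivisor x].
Proof.
split=> [[[M ->] nzd]|[HJ Jcl nzd]].
  by split=> //; [exact: trace_ideal_is_ideal | exact: trace_ideal_closed].
by split=> //; exists (ideal_module (Ideal HJ)); exact: trace_closed_trace_ideal.
Qed.

End Trace.

Section Krull.
Variables (A : comNzRingType) (x : A).

(* [set0] is admitted so that the empty chain has an upper bound. *)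
Let proper_with_x (J : set A) := J = set0 \/ [/\ is_ideal J, ~ J 1 & J x].

Let bigcup_chain_proper_with_x (F : set (set A)) :
  F `<=` proper_with_x -> total_on F subset -> proper_with_x (\bigcup_(J in F) J).
Proof.
move=> FP Ftot.
have [[c [X0 FX0 X0c]]|/forallNP empty] := pselect (exists c, (\bigcup_(J in F) J) c);
  last by left; apply/seteqP; split => // c Fc; apply: (empty c).
have FJ J y : F J -> J y -> [/\ is_ideal J, ~ J 1 & J x].
  by move=> /FP[-> //|].
have [[J0 _] _ X0x] := FJ _ _ FX0 X0c.
right; split; last 1 [by move=> [Y FY /[dup] Y1 /(FJ _ _ FY)[]] | by exists X0].
split; first by exists X0.
split=> [a b [Y1 FY1 Y1a] [Y2 FY2 Y2b]|r a [Y FY Ya]]; last first.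
  by exists Y => //; have [[_ [_ YM]] _ _] := FJ _ _ FY Ya; apply: YM.
have [s12|s21] := Ftot _ _ FY1 FY2.
  by exists Y2 => //; have [[_ [YD _]] _ _] := FJ _ _ FY2 Y2b; apply: YD => //; apply: s12.
by exists Y1 => //; have [[_ [YD _]] _ _] := FJ _ _ FY1 Y1a; apply: YD => //; apply: s21.
Qed.

Lemma nonunit_in_maximal_ideal :
  ~ (exists y, x * y = 1) -> exists2 m, maximal_ideal m & m x.
Proof.
move=> xNunit.
have [M [PM Mmax]] := Zorn_bigcup bigcup_chain_proper_with_x.
pose xA := [set a : A | exists r, a = r * x].
have PxA : proper_with_x xA.
  right; split; last by exists 1; rewrite mul1r.
  - split; first by exists 0; rewrite mul0r.
    split; first by move=> a b [r ->] [t ->]; exists (r + t); rewrite mulrDl.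
    by move=> a b [r ->]; exists (a * r); rewrite mulrA.
  - by move=> [r /esym]; rewrite mulrC => r1; apply: xNunit; exists r.
have [M0|[HM M1 Mx]] := PM.
  exfalso; apply: (Mmax xA) => //; rewrite M0; split => // /(_ x) [].
  by exists 1; rewrite mul1r.
exists M => //; split => //; split => // K HK MK.
have [K1|K1] := pselect (K 1); first by right; exact: ideal_setT.
left; apply: contrapT => KM; apply: (Mmax K); last by right; split => //; apply: MK.
by split => // KM'; apply: KM; apply/seteqP.
Qed.

End Krull.

Lemma ker_is_ideal (A B : comNzRingType) (f : {rmorphism A -> B}) :
  is_ideal [set a | f a = 0].
Proof.
split; first by rewrite /= rmorph0.
split=> [a b /= fa fb|r a /= fa]; first by rewrite rmorphD fa fb addr0.
by rewrite rmorphM fa mulr0.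
Qed.

Section Residue.
Variables (A : comNzRingType) (k : fieldType) (pi : {rmorphism A -> k}).
Hypothesis pi_surj : forall c : k, exists a : A, pi a = c.

Lemma ker_maximal_ideal : maximal_ideal [set a | pi a = 0].
Proof.
split; first exact: ker_is_ideal.
split=> [/= /eqP|J HJ kerJ]; first by rewrite rmorph1 oner_eq0.
have [[y Jy /negPf pyN0]|Jker] := pselect (exists2 y, J y & pi y != 0).
  right; apply: ideal_setT => //.
  have [s ps] := pi_surj (pi y)^-1.
  rewrite -(subrK (s * y) 1); apply: HJ.2.1; last exact: HJ.2.2.
  by apply: kerJ; rewrite /= rmorphB rmorph1 rmorphM ps mulVf ?pyN0 ?subrr.
left; apply/seteqP; split => // a Ja /=.
by apply/eqP; apply: contra_notT Jker => paN0; exists a.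
Qed.

Lemma local_residue_unit : is_local A -> forall x, pi x != 0 -> exists y, x * y = 1.
Proof.
move=> [m [_ m_uniq]] x /eqP pxN0.
apply: contrapT => /nonunit_in_maximal_ideal[m' m'max m'x].
apply: pxN0; suff : [set a | pi a = 0] x by [].
by rewrite (m_uniq _ ker_maximal_ideal) -(m_uniq _ m'max).
Qed.

End Residue.

Record pos_depth_residue (A : comNzRingType) (k : fieldType) (pi : {rmorphism A -> k})
  : Prop := PosDepthResidue {
  residue_surj : forall c : k, exists a, pi a = c;
  residue_unit : forall x, pi x != 0 -> exists y, x * y = 1;
  residue_nzd : exists2 a, pi a = 0 & nonzerodivisor a }.

Lemma local_pos_depth_residue (A : comNzRingType) (k : fieldType)
    (pi : {rmorphism A -> k}) : (forall c : k, exists a, pi a = c) ->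
  is_local A -> positive_depth A -> pos_depth_residue pi.
Proof.
move=> pi_surj loc depth; split => //; first exact: local_residue_unit.
exact: depth _ (ker_maximal_ideal pi_surj).
Qed.

(** Abstracting the fiber product makes its two factors interchangeable
    ([fiber_square_sym]). *)
Record fiber_square (R R1 R2 : comNzRingType) (k : fieldType)
    (pi1 : {rmorphism R1 -> k}) (pi2 : {rmorphism R2 -> k})
    (p : {rmorphism R -> R1}) (q : {rmorphism R -> R2}) (mk : R1 -> R2 -> R) : Prop :=
  FiberSquare {
    fs_inj : forall z z', p z = p z' -> q z = q z' -> z = z';
    fs_comm : forall z, pi1 (p z) = pi2 (q z);
    fs_mk1 : forall c d, pi1 c = pi2 d -> p (mk c d) = c;
    fs_mk2 : forall c d, pi1 c = pi2 d -> q (mk c d) = d }.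

Lemma fiber_square_sym (R R1 R2 : comNzRingType) (k : fieldType)
    (pi1 : {rmorphism R1 -> k}) (pi2 : {rmorphism R2 -> k})
    (p : {rmorphism R -> R1}) (q : {rmorphism R -> R2}) (mk : R1 -> R2 -> R) :
  fiber_square pi1 pi2 p q mk -> fiber_square pi2 pi1 q p (fun d c => mk c d).
Proof.
case=> inj comm mk1 mk2; split => [z z' ? ?|z|d c e|d c e]; first exact: inj.
- by rewrite comm.
- by rewrite mk2.
- by rewrite mk1.
Qed.

Section FiberSquare.
Variables (R R1 R2 : comNzRingType) (k : fieldType).
Variables (pi1 : {rmorphism R1 -> k}) (pi2 : {rmorphism R2 -> k}).
Variables (p : {rmorphism R -> R1}) (q : {rmorphism R -> R2}) (mk : R1 -> R2 -> R).
Hypothesis FS : fiber_square pi1 pi2 p q mk.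
Implicit Types (c : R1) (d : R2) (z : R).

Lemma p_mkl c : pi1 c = 0 -> p (mk c 0) = c.
Proof. by move=> c0; apply: (fs_mk1 FS); rewrite rmorph0. Qed.

Lemma q_mkl c : pi1 c = 0 -> q (mk c 0) = 0.
Proof. by move=> c0; apply: (fs_mk2 FS); rewrite rmorph0. Qed.

Lemma p_mkr d : pi2 d = 0 -> p (mk 0 d) = 0.
Proof. by move=> d0; apply: (fs_mk1 FS); rewrite rmorph0. Qed.

Lemma q_mkr d : pi2 d = 0 -> q (mk 0 d) = d.
Proof. by move=> d0; apply: (fs_mk2 FS); rewrite rmorph0. Qed.

Lemma mk00 : mk 0 0 = 0.
Proof. by apply: (fs_inj FS); rewrite ?p_mkl ?q_mkl ?rmorph0. Qed.

Lemma mkl_add c c' : pi1 c = 0 -> pi1 c' = 0 -> mk (c + c') 0 = mk c 0 + mk c' 0.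
Proof.
move=> c0 c'0; have cc'0 : pi1 (c + c') = 0 by rewrite rmorphD c0 c'0 addr0.
by apply: (fs_inj FS); rewrite !rmorphD ?p_mkl ?q_mkl ?addr0.
Qed.

Lemma mkl_mul r t c : pi1 r = pi2 t -> pi1 c = 0 -> mk (r * c) 0 = mk r t * mk c 0.
Proof.
move=> rt c0; have rc0 : pi1 (r * c) = 0 by rewrite rmorphM c0 mulr0.
by apply: (fs_inj FS); rewrite !rmorphM ?p_mkl ?q_mkl ?(fs_mk1 FS) ?(fs_mk2 FS) ?mulr0.
Qed.

Lemma mkr_mkl d c : pi2 d = 0 -> pi1 c = 0 -> mk 0 d * mk c 0 = 0.
Proof.
by move=> d0 c0; apply: (fs_inj FS); rewrite !rmorphM ?p_mkr ?q_mkl ?mul0r ?mulr0 ?rmorph0.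
Qed.

Lemma mkl_mkr_split z : pi1 (p z) = 0 -> z = mk (p z) 0 + mk 0 (q z).
Proof.
move=> pz0; have qz0 : pi2 (q z) = 0 by rewrite -(fs_comm FS).
by apply: (fs_inj FS); rewrite !rmorphD ?p_mkl ?q_mkl ?p_mkr ?q_mkr ?addr0 ?add0r.
Qed.

Lemma mk_nzd c d : pi1 c = pi2 d -> nonzerodivisor c -> nonzerodivisor d ->
  nonzerodivisor (mk c d).
Proof.
move=> cd c_nzd d_nzd z /[dup] /(congr1 p) pz /(congr1 q) qz.
apply: (fs_inj FS); rewrite rmorph0.
  by apply: c_nzd; rewrite -(fs_mk1 FS cd) -rmorphM pz rmorph0.
by apply: d_nzd; rewrite -(fs_mk2 FS cd) -rmorphM qz rmorph0.
Qed.

Definition fiber_ideal (I1 : set R1) (I2 : set R2) : set R :=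
  [set z | I1 (p z) /\ I2 (q z)].

Lemma fiber_ideal_is_ideal I1 I2 :
  is_ideal I1 -> is_ideal I2 -> is_ideal (fiber_ideal I1 I2).
Proof.
move=> [I10 [I1D I1M]] [I20 [I2D I2M]]; split; first by rewrite /fiber_ideal /= !rmorph0.
split=> [x y [? ?] [? ?]|a x [? ?]]; split; rewrite ?rmorphD ?rmorphM.
- exact: I1D.
- exact: I2D.
- exact: I1M.
- exact: I2M.
Qed.

Hypotheses (D1 : pos_depth_residue pi1) (D2 : pos_depth_residue pi2).

Lemma fiber_ideal_ker_closed (I1 : set R1) :
  is_ideal I1 -> I1 `<=` [set c | pi1 c = 0] -> trace_closed I1 ->
  trace_closed (fiber_ideal I1 [set d | pi2 d = 0]).
Proof.
move=> HI I1ker I1cl phi phiL z [I1z qz0].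
set E := fiber_ideal _ _.
have HE : is_ideal E := fiber_ideal_is_ideal HI (ker_is_ideal pi2).
have El c : I1 c -> E (mk c 0).
  by move=> Ic; have c0 := I1ker _ Ic; split; rewrite /= ?p_mkl ?q_mkl ?rmorph0.
have Er d : pi2 d = 0 -> E (mk 0 d).
  by move=> d0; split; rewrite /= ?p_mkr ?q_mkr //; case: HI.
have [a a0 a_nzd] := residue_nzd D1; have [b b0 b_nzd] := residue_nzd D2.
have q_phi_l c : I1 c -> q (phi (mk c 0)) = 0.
  move=> Ic; apply: b_nzd; rewrite -[b](q_mkr b0) -rmorphM.
  by rewrite (linear_on_annihilator HE phiL (El c Ic) (mkr_mkl b0 (I1ker _ Ic))) rmorph0.
have p_phi_r d : pi2 d = 0 -> p (phi (mk 0 d)) = 0.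
  move=> d0; apply: a_nzd; rewrite -[a](p_mkl a0) -rmorphM.
  by rewrite (linear_on_annihilator HE phiL (Er d d0)) ?rmorph0 // mulrC mkr_mkl.
have phizE : phi z = phi (mk (p z) 0) + phi (mk 0 (q z)).
  rewrite {1}(mkl_mkr_split (I1ker _ I1z)) -[mk (p z) 0]mul1r phiL ?mul1r //.
  - exact: El.
  - exact: Er.
split; rewrite /= phizE rmorphD; last first.
  by rewrite q_phi_l // add0r -(fs_comm FS) p_phi_r ?rmorph0.
rewrite p_phi_r // addr0; apply: I1cl (fun c => p (phi (mk c 0))) _ _ I1z.
move=> r c c' Ic Ic'; have [t /esym rt] := residue_surj D2 (pi1 r).
have rc0 : pi1 (r * c) = 0 by rewrite rmorphM (I1ker _ Ic) mulr0.
rewrite mkl_add ?(I1ker _ Ic') // (mkl_mul rt) ?(I1ker _ Ic) // phiL; try exact: El.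
by rewrite rmorphD rmorphM (fs_mk1 FS rt).
Qed.

Lemma fiber_ideal_ker_calT (I1 : set R1) : calT R1 I1 -> I1 <> setT ->
  calT R (fiber_ideal I1 [set d | pi2 d = 0]).
Proof.
move=> /calT_iff[HI I1cl [a I1a a_nzd]] I1nT.
have I1ker := proper_ideal_sub_ker (residue_unit D1) HI I1nT.
have [b b0 b_nzd] := residue_nzd D2.
have ab : pi1 a = pi2 b by rewrite b0 I1ker.
apply/calT_iff; split; first exact: fiber_ideal_is_ideal HI (ker_is_ideal pi2).
  exact: fiber_ideal_ker_closed.
by exists (mk a b); [rewrite /fiber_ideal /= (fs_mk1 FS ab) (fs_mk2 FS ab) | exact: mk_nzd].
Qed.

Lemma fiber_ideal_ker_image (I1 : set R1) : I1 `<=` [set c | pi1 c = 0] ->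
  p @` fiber_ideal I1 [set d | pi2 d = 0] = I1.
Proof.
move=> I1ker; apply/seteqP; split=> [_ [z [I1z _] <-] //|c Ic].
have c0 := I1ker _ Ic; exists (mk c 0); last exact: p_mkl.
by split; rewrite /= ?p_mkl ?q_mkl ?rmorph0.
Qed.

Lemma calT_finite_fst : finite_set (calT R) -> finite_set (calT R1).
Proof.
move=> finR; apply: (@sub_finite_set _ _ ((image^~ p @` calT R) `|` [set setT])).
  move=> I1 TI1; have [->|I1nT] := pselect (I1 = setT); first by right.
  have /calT_iff[HI _ _] := TI1.
  left; exists (fiber_ideal I1 [set d | pi2 d = 0]); first exact: fiber_ideal_ker_calT.
  exact/fiber_ideal_ker_image/(proper_ideal_sub_ker (residue_unit D1) HI I1nT).
by rewrite finite_setU; split; [exact: finite_image | exact: finite_set1].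
Qed.

Lemma fs_unit z : pi1 (p z) != 0 -> exists w, z * w = 1.
Proof.
move=> pzN0; have [w1 zw1] := residue_unit D1 pzN0.
have qzN0 : pi2 (q z) != 0 by rewrite -(fs_comm FS).
have [w2 zw2] := residue_unit D2 qzN0.
have w12 : pi1 w1 = pi2 w2.
  by apply: (mulfI pzN0); rewrite -rmorphM zw1 rmorph1 (fs_comm FS) -rmorphM zw2 rmorph1.
exists (mk w1 w2); apply: (fs_inj FS).
  by rewrite rmorphM rmorph1 (fs_mk1 FS w12).
by rewrite rmorphM rmorph1 (fs_mk2 FS w12).
Qed.

Lemma calT_sub_ker (J : set R) : calT R J -> J <> setT -> J `<=` [set z | pi1 (p z) = 0].
Proof. by move=> /calT_iff[HJ _ _]; apply: (proper_ideal_sub_ker fs_unit HJ). Qed.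

Lemma lift_linear_on (I1 : set R1) (J : set R) (h : R1 -> R1) :
  (forall z, J z -> I1 (p z)) -> linear_on I1 h -> (forall c, I1 c -> pi1 (h c) = 0) ->
  linear_on J (fun z => mk (h (p z)) 0).
Proof.
move=> JI1 hL hker a x y /JI1 Ix /JI1 Iy; rewrite rmorphD rmorphM hL //.
have hx0 := hker _ Ix; have hy0 := hker _ Iy.
have hxy0 : pi1 (p a * h (p x) + h (p y)) = 0.
  by rewrite rmorphD rmorphM hx0 hy0 mulr0 addr0.
by apply: (fs_inj FS); rewrite !rmorphD !rmorphM ?p_mkl ?q_mkl ?mulr0 ?addr0.
Qed.

Definition fiber_part (J : set R) : set R1 := [set c | J (mk c 0) /\ pi1 c = 0].

Lemma fiber_part_is_ideal (J : set R) : is_ideal J -> is_ideal (fiber_part J).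
Proof.
move=> [J0 [JD JM]]; split; first by split; rewrite ?mk00 ?rmorph0.
split=> [c c' [Jc c0] [Jc' c'0]|r c [Jc c0]].
  by split; rewrite ?mkl_add ?rmorphD ?c0 ?c'0 ?addr0 //; apply: JD.
have [t /esym rt] := residue_surj D2 (pi1 r).
by split; rewrite ?(mkl_mul rt) ?rmorphM ?c0 ?mulr0 //; apply: JM.
Qed.

Lemma calT_fiber_part_fst (J : set R) : calT R J -> J <> setT ->
  forall z, J z -> fiber_part J (p z).
Proof.
move=> TJ JnT z Jz; split; last exact: calT_sub_ker TJ JnT _ Jz.
have /calT_iff[_ Jcl _] := TJ.
exact: Jcl _ (@lift_linear_on [set c | pi1 c = 0] J id (calT_sub_ker TJ JnT) _ _) _ Jz.
Qed.

Lemma fiber_part_nzd (J : set R) : calT R J -> J <> setT ->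
  exists2 c, fiber_part J c & nonzerodivisor c.
Proof.
move=> /[dup] TJ /calT_iff[_ _ [z Jz z_nzd]] JnT.
exists (p z); first exact: calT_fiber_part_fst.
move=> c pzc0; have [y y0 y_nzd] := residue_nzd D1.
have cy0 : pi1 (c * y) = 0 by rewrite rmorphM y0 mulr0.
have /(congr1 p) : mk (c * y) 0 = 0.
  apply: z_nzd; apply: (fs_inj FS); rewrite !rmorphM ?p_mkl ?q_mkl ?rmorph0 //.
  - by rewrite mulrA pzc0 mul0r.
  - by rewrite mulr0.
by rewrite p_mkl // rmorph0 mulrC => /y_nzd.
Qed.

Lemma fiber_part_closed_in_ker (J : set R) (phi : R1 -> R1) : calT R J -> J <> setT ->
  linear_on (fiber_part J) phi -> (forall c, fiber_part J c -> pi1 (phi c) = 0) ->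
  forall c, fiber_part J c -> fiber_part J (phi c).
Proof.
move=> TJ JnT phiL phiker c [Jc c0]; split; last exact: phiker.
have /calT_iff[_ Jcl _] := TJ.
have liftL := lift_linear_on (calT_fiber_part_fst TJ JnT) phiL phiker.
by have := Jcl _ liftL _ Jc; rewrite p_mkl.
Qed.

Lemma fiber_part_eq_ker (J : set R) (phi : R1 -> R1) c0 : calT R J -> J <> setT ->
  linear_on (fiber_part J) phi -> fiber_part J c0 -> pi1 (phi c0) != 0 ->
  fiber_part J = [set c | pi1 c = 0].
Proof.
move=> TJ JnT phiL Ic0 phic0N0; apply/seteqP; split=> [c [] //|y y0].
have /calT_iff[HJ _ _] := TJ.
have Iyphi : fiber_part J (y * phi c0).
  (* y * phi takes values in n1, so it preserves the fiber part. *)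
  apply: (@fiber_part_closed_in_ker _ (fun c => y * phi c)) => // [a u v Iu Iv|c _].
    by rewrite phiL // mulrDr mulrCA.
  by rewrite rmorphM y0 mul0r.
have [v phiv] := residue_unit D1 phic0N0.
have -> : y = v * (y * phi c0) by rewrite mulrCA [v * _]mulrC phiv mulr1.
exact: (fiber_part_is_ideal HJ).2.2.
Qed.

Lemma fiber_part_calT (J : set R) : calT R J -> J <> setT ->
  calT R1 (fiber_part J) \/ fiber_part J = [set c | pi1 c = 0].
Proof.
move=> TJ JnT; have [[phi [c0 [phiL Ic0 phic0N0]]]|noescape] := pselect
  (exists phi c0, [/\ linear_on (fiber_part J) phi, fiber_part J c0 & pi1 (phi c0) != 0]).
  by right; apply: fiber_part_eq_ker phiL Ic0 phic0N0.
have /calT_iff[HJ _ _] := TJ.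
left; apply/calT_iff; split; first exact: fiber_part_is_ideal.
  move=> phi phiL; apply: fiber_part_closed_in_ker => // c Ic.
  by apply/eqP; apply: contra_notT noescape => ?; exists phi, c.
exact: fiber_part_nzd.
Qed.

End FiberSquare.

Section FiberSquareFinite.
Variables (R R1 R2 : comNzRingType) (k : fieldType).
Variables (pi1 : {rmorphism R1 -> k}) (pi2 : {rmorphism R2 -> k}).
Variables (p : {rmorphism R -> R1}) (q : {rmorphism R -> R2}) (mk : R1 -> R2 -> R).
Hypothesis FS : fiber_square pi1 pi2 p q mk.
Hypotheses (D1 : pos_depth_residue pi1) (D2 : pos_depth_residue pi2).

Let FS' := fiber_square_sym FS.
Let mk' := fun d c => mk c d.

Lemma calT_fiber_parts (J : set R) : calT R J -> J <> setT ->
  J = fiber_ideal p q (fiber_part pi1 mk J) (fiber_part pi2 mk' J).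
Proof.
move=> TJ JnT; apply/seteqP; split=> [z Jz|z [[Jz1 pz0] [Jz2 _]]].
  by split; [exact: (calT_fiber_part_fst FS D1 D2 TJ JnT Jz)
            | exact: (calT_fiber_part_fst FS' D2 D1 TJ JnT Jz)].
have /calT_iff[[_ [JD _]] _ _] := TJ.
by rewrite (mkl_mkr_split FS pz0); apply: JD.
Qed.

Lemma fiber_square_calT_finite :
  finite_set (calT R) <-> finite_set (calT R1) /\ finite_set (calT R2).
Proof.
split=> [finR|[fin1 fin2]].
  by split; [exact: (calT_finite_fst FS D1 D2 finR)
            | exact: (calT_finite_fst FS' D2 D1 finR)].
pose S1 := calT R1 `|` [set [set c | pi1 c = 0]].
pose S2 := calT R2 `|` [set [set d | pi2 d = 0]].
apply: (@sub_finite_set _ _ ([set fiber_ideal p q P.1 P.2 | P in S1 `*` S2] `|` [set setT]));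
  last first.
  rewrite finite_setU; split; last exact: finite_set1.
  by apply/finite_image/finite_setX; rewrite !finite_setU; split; try exact: finite_set1.
move=> J TJ; have [->|JnT] := pselect (J = setT); first by right.
left; exists (fiber_part pi1 mk J, fiber_part pi2 mk' J); last by rewrite -calT_fiber_parts.
by split; [exact: (fiber_part_calT FS D1 D2 TJ JnT)
          | exact: (fiber_part_calT FS' D2 D1 TJ JnT)].
Qed.

End FiberSquareFinite.

Section FiberProduct.
Variables (R1 R2 : comNzRingType) (k : fieldType).
Variables (pi1 : {rmorphism R1 -> k}) (pi2 : {rmorphism R2 -> k}).
Let R := fiber_product pi1 pi2.

Definition fp_fst : {rmorphism R -> R1} :=
  GRing.RMorphism.clone _ _ (fst \o (val : R -> (R1 * R2)%type)) _.
Definition fp_snd : {rmorphism R -> R2} :=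
  GRing.RMorphism.clone _ _ (snd \o (val : R -> (R1 * R2)%type)) _.
(* [fp_pair c d] is 0 unless [pi1 c = pi2 d]. *)
Definition fp_pair (c : R1) (d : R2) : R := insubd 0 (c, d).

Lemma fiber_product_square : fiber_square pi1 pi2 fp_fst fp_snd fp_pair.
Proof.
have pairK c d : pi1 c = pi2 d -> val (fp_pair c d) = (c, d).
  by move=> cd; rewrite insubdK // inE /= cd.
split=> [z z' e1 e2|z|c d /pairK /= ->|c d /pairK /= ->] //.
  apply: val_inj; rewrite [val z]surjective_pairing [val z']surjective_pairing.
  by congr pair.
by apply/eqP; have := valP z; rewrite inE.
Qed.

End FiberProduct.

Unset Implicit Arguments.
Theorem corollary5p2 (R1 R2 : comNzRingType) (k : fieldType)
    (pi1 : {rmorphism R1 -> k}) (pi2 : {rmorphism R2 -> k})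
    (pi1_surj : forall c : k, exists s : R1, pi1 s = c)
    (pi2_surj : forall c : k, exists t : R2, pi2 t = c)
    (noeth1 : noetherian R1) (noeth2 : noetherian R2)
    (loc1 : is_local R1) (loc2 : is_local R2)
    (depth1 : positive_depth R1) (depth2 : positive_depth R2) :
  finite_set (calT (fiber_product pi1 pi2)) <->
  finite_set (calT R1) /\ finite_set (calT R2).
Proof.
have D1 := local_pos_depth_residue pi1_surj loc1 depth1.
have D2 := local_pos_depth_residue pi2_surj loc2 depth2.
exact: fiber_square_calT_finite (fiber_product_square pi1 pi2) D1 D2.
Qed.
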